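(* Let $(A,\to,1)$ be any algebra of type $(2,0)$. Then (i) if $(A,\to,1)$ satisfies (M) and (BB), it satisfies (B); (ii) if $(A,\to,1)$ satisfies (M) and (B), it satisfies ( ** ).
   Context: Properties, required for all $x,y,z\in A$: (M) $1\to x=x$; (B) $(y\to z)\to((x\to y)\to(x\to z))=1$; (BB) $(y\to z)\to((z\to x)\to(y\to x))=1$; ( ** ) $y\to z=1$ implies $(z\to x)\to(y\to x)=1$. *)

Definition prop_M {A : Type} (imp : A -> A -> A) (one : A) : Prop :=
  forall x : A, imp one x = x.

Definition prop_B {A : Type} (imp : A -> A -> A) (one : A) : Prop :=
  forall x y z : A, imp (imp y z) (imp (imp x y) (imp x z)) = one.

Definition prop_BB {A : Type} (imp : A -> A -> A) (one : A) : Prop :=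
  forall x y z : A, imp (imp y z) (imp (imp z x) (imp y x)) = one.

Definition prop_SS {A : Type} (imp : A -> A -> A) (one : A) : Prop :=
  forall x y z : A, imp y z = one -> imp (imp z x) (imp y x) = one.


(* Under (M), every instance of (BB) whose first antecedent equals 1 collapses
   to its conclusion; this gives (**), transitivity of [_ -> _ = 1] and
   [v -> ((v -> w) -> w) = 1].  Together these let the two antecedents of a
   provable implication be exchanged, and exchanging those of (BB) yields (B).
   Part (ii) is the analogous collapse of an instance of (B). *)

Section FromBB.

Variables (A : Type) (imp : A -> A -> A) (one : A).
Hypothesis HM : prop_M imp one.
Hypothesis HBB : prop_BB imp one.

Lemma BB_SS : prop_SS imp one.
Proof.
  intros x y z Hyz. pose proof (HBB x y z) as E.
  rewrite Hyz, HM in E. exact E.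
Qed.

Lemma BB_trans (a b c : A) :
  imp a b = one -> imp b c = one -> imp a c = one.
Proof.
  intros Hab Hbc. pose proof (HBB c a b) as E.
  rewrite Hab, HM, Hbc, HM in E. exact E.
Qed.

Lemma BB_modus_ponens (v w : A) : imp v (imp (imp v w) w) = one.
Proof.
  pose proof (HBB w one v) as E. rewrite !HM in E. exact E.
Qed.

Lemma BB_exchange (u v w : A) :
  imp u (imp v w) = one -> imp v (imp u w) = one.
Proof.
  intros H. apply (BB_trans _ _ _ (BB_modus_ponens v w)).
  apply BB_SS. exact H.
Qed.

Lemma BB_B : prop_B imp one.
Proof. intros x y z. apply BB_exchange. apply HBB. Qed.

End FromBB.

Lemma B_SS (A : Type) (imp : A -> A -> A) (one : A) :
  prop_M imp one -> prop_B imp one -> prop_SS imp one.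
Proof.
  intros HM HB x y z Hyz. pose proof (HB y z x) as E.
  rewrite Hyz, HM in E. exact E.
Qed.

Theorem theorem2p6 (A : Type) (imp : A -> A -> A) (one : A) :
  (prop_M imp one -> prop_BB imp one -> prop_B imp one) /\
  (prop_M imp one -> prop_B imp one -> prop_SS imp one).
Proof.
  split.
  - exact (BB_B A imp one).
  - exact (B_SS A imp one).
Qed.
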